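(* For $0<\alpha<1$ let $$u(\alpha)=\int_{\alpha}^{1}\frac{(1-\rho^2)^{\frac{2m-1}{2}}}{\{1-(1-\rho^2)^m\}^{\frac{2m-1}{2m}}}\,d\rho .$$ Then $u$ is finite on $(0,1)$, $u(\alpha)\to0$ and $u'(\alpha)\to0$ as $\alpha\to1^-$, and $u(\alpha)\to+\infty$ as $\alpha\to0^+$. The rotational surfaces $(\alpha\cos v,\alpha\sin v,\pm u(\alpha))$, $0<\alpha<1$, have constant Minkowski Gaussian curvature $-1$.
   Context: Fix an integer $m\ge 2$. Let $\Phi(x_1,x_2,x_3)=(x_1^2+x_2^2)^m+x_3^{2m}$ and let $\|\cdot\|$ be the norm on $\mathbb{R}^3$ whose unit sphere is $S=\{x\in\mathbb{R}^3:\Phi(x)=1\}$ (a smooth, strictly convex surface). For a surface given by a parametrization $f(s,v)$, its Birkhoff–Gauss map $\eta$ is the map into $S$ defined by requiring $\eta\in S$ and $\nabla\Phi(\eta)=\mu\, f_s\times f_v$ for some function $\mu>0$, where $\times$ is the standard cross product (so the tangent plane of $S$ at $\eta(p)$ is parallel to $T_pM$, and $d\eta_p$ is an endomorphism of $T_pM$). The Minkowski Gaussian curvature is $K=\det(d\eta_p)$ (independent of orientation). *)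

From Stdlib Require Import Reals.
From Coquelicot Require Import Coquelicot.
Open Scope R_scope.

Record V3 : Type := mkV3 { c1 : R ; c2 : R ; c3 : R }.

Definition vadd (a b : V3) : V3 := mkV3 (c1 a + c1 b) (c2 a + c2 b) (c3 a + c3 b).
Definition vscal (k : R) (a : V3) : V3 := mkV3 (k * c1 a) (k * c2 a) (k * c3 a).
Definition cross (a b : V3) : V3 :=
  mkV3 (c2 a * c3 b - c3 a * c2 b)
       (c3 a * c1 b - c1 a * c3 b)
       (c1 a * c2 b - c2 a * c1 b).

(** Real power x^y for x >= 0, with the convention 0^y = 0 (used only for y > 0). *)
Definition rpow (x y : R) : R := if Rlt_dec 0 x then Rpower x y else 0.

Definition Phi (m : nat) (x : V3) : R :=
  (c1 x ^ 2 + c2 x ^ 2) ^ m + c3 x ^ (2 * m).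

Definition gradPhi (m : nat) (x : V3) : V3 :=
  mkV3 (Derive (fun t => Phi m (mkV3 t (c2 x) (c3 x))) (c1 x))
       (Derive (fun t => Phi m (mkV3 (c1 x) t (c3 x))) (c2 x))
       (Derive (fun t => Phi m (mkV3 (c1 x) (c2 x) t)) (c3 x)).

Definition integrand (m : nat) (rho : R) : R :=
  rpow (1 - rho ^ 2) ((2 * INR m - 1) / 2)
  / rpow (1 - (1 - rho ^ 2) ^ m) ((2 * INR m - 1) / (2 * INR m)).

Definition u (m : nat) (alpha : R) : R := RInt (integrand m) alpha 1.

Definition d_s (F : R -> R -> V3) (s v : R) : V3 :=
  mkV3 (Derive (fun t => c1 (F t v)) s)
       (Derive (fun t => c2 (F t v)) s)
       (Derive (fun t => c3 (F t v)) s).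
Definition d_v (F : R -> R -> V3) (s v : R) : V3 :=
  mkV3 (Derive (fun t => c1 (F s t)) v)
       (Derive (fun t => c2 (F s t)) v)
       (Derive (fun t => c3 (F s t)) v).

Definition partials_exist (F : R -> R -> V3) (s v : R) : Prop :=
  ex_derive (fun t => c1 (F t v)) s /\ ex_derive (fun t => c2 (F t v)) s /\
  ex_derive (fun t => c3 (F t v)) s /\
  ex_derive (fun t => c1 (F s t)) v /\ ex_derive (fun t => c2 (F s t)) v /\
  ex_derive (fun t => c3 (F s t)) v.

Definition rot_surf (m : nat) (eps : R) (s v : R) : V3 :=
  mkV3 (s * cos v) (s * sin v) (eps * u m s).

Definition is_BG_map (m : nat) (D : R -> R -> Prop) (F eta : R -> R -> V3) : Prop :=
  forall s v, D s v ->
    Phi m (eta s v) = 1 /\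
    exists mu, 0 < mu /\ gradPhi m (eta s v) = vscal mu (cross (d_s F s v) (d_v F s v)).

(** Minkowski Gaussian curvature at (s,v) equals k: d eta_p is an endomorphism
    of T_pM = span(F_s, F_v), with matrix [[a, b], [c, d]] in the basis (F_s, F_v)
    (eta_s = a F_s + c F_v, eta_v = b F_s + d F_v), and k = det = a d - b c. *)
Definition minkK_eq (F eta : R -> R -> V3) (s v k : R) : Prop :=
  exists a b c d,
    d_s eta s v = vadd (vscal a (d_s F s v)) (vscal c (d_v F s v)) /\
    d_v eta s v = vadd (vscal b (d_s F s v)) (vscal d (d_v F s v)) /\
    k = a * d - b * c.

Definition param_dom (s v : R) : Prop := 0 < s < 1.

From Pilot Require Import Defs.
From Stdlib Require Import Reals Lra Lia Psatz.
From Coquelicot Require Import Coquelicot.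
Open Scope R_scope.

(* On (0,1) the integrand equals [(1-r^2)^(m-1) sqrt(1-r^2) B^(-(2m-1)/(2m))] with
   [B = 1-(1-r^2)^m]; this expression stays continuous across r = 1, where it vanishes,
   so u is C^1 up to 1 with u' = -integrand.  Near 0, Bernoulli gives [B <= m r^2], so the
   integrand is at least c/r and u grows like -c ln alpha.

   On S the direction of the gradient of Phi determines [(x1^2+x2^2)/x3^2], and then Phi = 1
   determines the point, so the Birkhoff-Gauss map is unique.  It is
   [eta = (eps sqrt(1-s^2) cos v, eps sqrt(1-s^2) sin v, B^(1/(2m)))], whose partials are
   [eta_s = -(eps s / sqrt(1-s^2)) F_s] and [eta_v = (eps sqrt(1-s^2) / s) F_v]:
   d eta is diagonal with determinant [-eps^2 = -1]. *)

(* [Reals] exports its own [c1] (from RiemannInt), which would shadow the coordinate. *)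
Local Notation c1 := Defs.c1.
Local Notation c2 := Defs.c2.
Local Notation c3 := Defs.c3.

Lemma Rpower_pow_mult (x a : R) (n : nat) : Rpower x a ^ n = Rpower x (a * INR n).
Proof. rewrite <- Rpower_pow by apply exp_pos. apply Rpower_mult. Qed.

Lemma Rpower_minus_1 (x a : R) : 0 < x -> Rpower x (a - 1) = Rpower x a / x.
Proof. intros Hx. unfold Rminus. rewrite Rpower_plus, Rpower_Ropp, Rpower_1 by exact Hx. reflexivity. Qed.

Lemma Rpower_le_exponent (x a b : R) : 0 < x <= 1 -> a <= b -> Rpower x b <= Rpower x a.
Proof.
  intros Hx Hab. unfold Rpower.
  assert (ln x <= 0) by (rewrite <- ln_1; apply ln_le; lra).
  destruct (Rle_lt_or_eq_dec (b * ln x) (a * ln x)) as [Hlt|Heq]; [nra| |].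
  - left. apply exp_increasing. exact Hlt.
  - rewrite Heq. right. reflexivity.
Qed.

Lemma pow_lt_compat_l (a b : R) (k : nat) : (0 < k)%nat -> 0 <= a < b -> a ^ k < b ^ k.
Proof.
  intros Hk Hab. induction k as [|[|k] IH]; [lia|simpl; lra|].
  assert (a ^ S k < b ^ S k) by (apply IH; lia).
  assert (0 <= a ^ S k) by (apply pow_le; lra).
  change (a * a ^ S k < b * b ^ S k). nra.
Qed.

Lemma pow_inj_l (a b : R) (k : nat) : (0 < k)%nat -> 0 <= a -> 0 <= b -> a ^ k = b ^ k -> a = b.
Proof.
  intros Hk Ha Hb E.
  destruct (Rtotal_order a b) as [Hlt|[Heq|Hgt]]; [exfalso| exact Heq |exfalso].
  - pose proof (pow_lt_compat_l a b k Hk (conj Ha Hlt)). lra.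
  - pose proof (pow_lt_compat_l b a k Hk (conj Hb Hgt)). lra.
Qed.

Lemma one_sub_pow_le (y : R) (n : nat) : 0 <= y <= 1 -> 1 - y ^ n <= INR n * (1 - y).
Proof.
  intros Hy. induction n as [|n IH]; [simpl; lra|].
  assert (y ^ n <= 1) by (rewrite <- (pow1 n); apply pow_incr; lra).
  assert (0 <= y ^ n) by (apply pow_le; lra).
  rewrite S_INR. simpl. nra.
Qed.

Lemma RInt_scal_inv (c a b : R) : 0 < a -> 0 < b -> RInt (fun x => c / x) a b = c * ln b - c * ln a.
Proof.
  intros Ha Hb.
  assert (0 < Rmin a b) by (apply Rmin_glb_lt; assumption).
  apply is_RInt_unique.
  apply (is_RInt_derive (fun x => c * ln x)); intros x Hx.
  - auto_derive; [lra|field; lra].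
  - apply (ex_derive_continuous (fun x => c / x)). auto_derive. lra.
Qed.

Definition den (m : nat) (r : R) : R := 1 - (1 - r ^ 2) ^ m.
Definition expo (m : nat) : R := (2 * INR m - 1) / (2 * INR m).

Definition integrand_ext (m : nat) (r : R) : R :=
  (1 - r ^ 2) ^ (m - 1) * sqrt (1 - r ^ 2) * Rpower (den m r) (- expo m).

Lemma den_pos (m : nat) (r : R) : (1 <= m)%nat -> 0 < r ^ 2 < 2 -> 0 < den m r.
Proof.
  intros Hm Hr. unfold den.
  assert (Hx : Rabs (1 - r ^ 2) < 1) by (apply Rabs_def1; lra).
  pose proof (pow_Rabs (1 - r ^ 2) m).
  pose proof (pow_lt_1_compat (Rabs (1 - r ^ 2)) m (conj (Rabs_pos _) Hx) ltac:(lia)).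
  lra.
Qed.

Lemma integrand_ext_continuous (m : nat) (r : R) :
  (1 <= m)%nat -> 0 < r < 5/4 -> continuous (integrand_ext m) r.
Proof.
  intros Hm Hr. pose proof (den_pos m r Hm ltac:(nra)) as Hd.
  apply (continuous_mult (fun y => (1 - y ^ 2) ^ (m - 1) * sqrt (1 - y ^ 2))).
  - apply (continuous_mult (fun y => (1 - y ^ 2) ^ (m - 1))).
    + apply (ex_derive_continuous (fun y => (1 - y ^ 2) ^ (m - 1))). auto_derive; auto.
    + apply continuous_sqrt_comp, (ex_derive_continuous (fun y => 1 - y ^ 2)). auto_derive; auto.
  - apply (ex_derive_continuous (fun y => Rpower (den m y) (- expo m))).
    unfold Rpower, den in *. auto_derive. replace (1 + - (r * (r * 1))) with (1 - r ^ 2) by ring. lra.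
Qed.

Lemma integrand_eq_ext (m : nat) (r : R) :
  (1 <= m)%nat -> 0 < r < 1 -> integrand m r = integrand_ext m r.
Proof.
  intros Hm Hr. unfold integrand, rpow, integrand_ext.
  assert (H1 : 0 < 1 - r ^ 2) by nra.
  pose proof (den_pos m r Hm ltac:(nra)) as Hd. unfold den in Hd.
  destruct (Rlt_dec 0 (1 - r ^ 2)) as [_|C]; [|lra].
  destruct (Rlt_dec 0 (1 - (1 - r ^ 2) ^ m)) as [_|C]; [|lra].
  replace ((2 * INR m - 1) / 2) with (INR (m - 1) + / 2) by (rewrite minus_INR by lia; simpl; field).
  rewrite Rpower_plus, Rpower_pow, Rpower_sqrt, Rpower_Ropp by lra.
  reflexivity.
Qed.

Lemma integrand_ext_1 (m : nat) : integrand_ext m 1 = 0.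
Proof. unfold integrand_ext. replace (1 - 1 ^ 2) with 0 by ring. rewrite sqrt_0. ring. Qed.

Lemma integrand_ext_nonneg (m : nat) (r : R) : 0 < r < 1 -> 0 <= integrand_ext m r.
Proof.
  intros Hr. unfold integrand_ext.
  apply Rmult_le_pos; [apply Rmult_le_pos; [apply pow_le; nra | apply sqrt_pos]|].
  left; apply exp_pos.
Qed.

Definition U (m : nat) (a : R) : R := RInt (integrand_ext m) a 1.

Lemma ex_RInt_integrand_ext (m : nat) (a b : R) :
  (1 <= m)%nat -> 0 < a < 5/4 -> 0 < b < 5/4 -> ex_RInt (integrand_ext m) a b.
Proof.
  intros Hm Ha Hb. apply (ex_RInt_continuous (V := R_CompleteNormedModule)).
  intros z Hz. apply integrand_ext_continuous; [exact Hm|].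
  pose proof (Rmin_glb_lt a b 0). pose proof (Rmax_lub_lt a b (5/4)). lra.
Qed.

Lemma is_derive_U (m : nat) (a : R) :
  (1 <= m)%nat -> 0 < a < 5/4 -> is_derive (U m) a (- integrand_ext m a).
Proof.
  intros Hm Ha. apply (is_derive_RInt' (integrand_ext m) (U m) a 1).
  - apply (locally_interval _ a 0 (5/4)); try (simpl; lra).
    intros x Hx0 Hx1. apply (RInt_correct (V := R_CompleteNormedModule)).
    apply ex_RInt_integrand_ext; simpl in *; [exact Hm|lra|lra].
  - apply integrand_ext_continuous; assumption.
Qed.

Lemma u_eq_U (m : nat) (a : R) : (1 <= m)%nat -> 0 < a < 1 -> u m a = U m a.
Proof.
  intros Hm Ha. apply RInt_ext. intros y Hy.
  rewrite Rmin_left, Rmax_right in Hy by lra.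
  apply integrand_eq_ext; [exact Hm|lra].
Qed.

Lemma u_locally_U (m : nat) (a : R) :
  (1 <= m)%nat -> 0 < a < 1 -> locally a (fun x => u m x = U m x).
Proof.
  intros Hm Ha. apply (locally_interval _ a 0 1); try (simpl; lra).
  intros x Hx0 Hx1. apply u_eq_U; simpl in *; [exact Hm|lra].
Qed.

Lemma at_left_1_unit_interval : at_left 1 (fun x => 0 < x < 1).
Proof.
  apply (locally_interval _ 1 0 2); try (simpl; lra).
  intros x Hx0 _ Hx1. simpl in *. lra.
Qed.

Definition lower_const (m : nat) : R := (3/4) ^ (m - 1) * sqrt (3/4) / sqrt (INR m).

Lemma lower_const_pos (m : nat) : (1 <= m)%nat -> 0 < lower_const m.
Proof.
  intros Hm. assert (0 < INR m) by (apply lt_0_INR; lia).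
  unfold lower_const. apply Rmult_lt_0_compat; [apply Rmult_lt_0_compat|].
  - apply pow_lt; lra.
  - apply sqrt_lt_R0; lra.
  - apply Rinv_0_lt_compat, sqrt_lt_R0; lra.
Qed.

(* For [r <= 1/2]: [1 - r^2 >= 3/4], [den m r <= m r^2] by Bernoulli, and [expo m >= 1/2]. *)
Lemma integrand_ext_lower (m : nat) (r : R) :
  (1 <= m)%nat -> 0 < r <= 1/2 -> lower_const m / r <= integrand_ext m r.
Proof.
  intros Hm Hr. assert (HmR : 1 <= INR m) by (apply (le_INR 1); lia).
  pose proof (den_pos m r Hm ltac:(nra)) as Hd.
  assert (Hd1 : den m r <= INR m * r ^ 2).
  { unfold den. pose proof (one_sub_pow_le (1 - r ^ 2) m ltac:(nra)). lra. }
  assert (Hd2 : den m r <= 1) by (unfold den; pose proof (pow_le (1 - r ^ 2) m ltac:(nra)); lra).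
  assert (Hexpo : 1/2 <= expo m).
  { unfold expo. apply Rmult_le_reg_r with (2 * INR m); [lra|]. field_simplify; lra. }
  assert (Hsm : 0 < sqrt (INR m)) by (apply sqrt_lt_R0; lra).
  assert (Hpow : / (sqrt (INR m) * r) <= Rpower (den m r) (- expo m)).
  { apply Rle_trans with (Rpower (den m r) (- / 2)).
    - rewrite Rpower_Ropp, Rpower_sqrt by exact Hd.
      apply Rinv_le_contravar; [apply sqrt_lt_R0; exact Hd|].
      replace (sqrt (INR m) * r) with (sqrt (INR m * r ^ 2))
        by (rewrite sqrt_mult, sqrt_pow2 by nra; reflexivity).
      apply sqrt_le_1_alt. lra.
    - apply Rpower_le_exponent; lra. }
  assert (E1 : (3/4) ^ (m - 1) <= (1 - r ^ 2) ^ (m - 1)) by (apply pow_incr; nra).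
  assert (E2 : sqrt (3/4) <= sqrt (1 - r ^ 2)) by (apply sqrt_le_1_alt; nra).
  unfold integrand_ext, lower_const.
  replace ((3/4) ^ (m - 1) * sqrt (3/4) / sqrt (INR m) / r)
    with ((3/4) ^ (m - 1) * sqrt (3/4) * / (sqrt (INR m) * r)) by (field; lra).
  pose proof (pow_le (3/4) (m - 1) ltac:(lra)). pose proof (sqrt_pos (3/4)).
  apply Rmult_le_compat; [apply Rmult_le_pos; assumption | left; apply Rinv_0_lt_compat; nra | |exact Hpow].
  apply Rmult_le_compat; assumption.
Qed.

Lemma U_lower (m : nat) (a : R) :
  (1 <= m)%nat -> 0 < a < 1/2 -> lower_const m * (ln (1/2) - ln a) <= U m a.
Proof.
  intros Hm Ha. unfold U.
  rewrite <- (RInt_Chasles (integrand_ext m) a (1/2) 1)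
    by (apply ex_RInt_integrand_ext; [exact Hm|lra|lra]).
  change (plus ?x ?y) with (x + y).
  assert (0 <= RInt (integrand_ext m) (1/2) 1).
  { apply RInt_ge_0; [lra| apply ex_RInt_integrand_ext; [exact Hm|lra|lra] |].
    intros x Hx. apply integrand_ext_nonneg. lra. }
  assert (RInt (fun x => lower_const m / x) a (1/2) <= RInt (integrand_ext m) a (1/2)).
  { apply RInt_le; [lra| |apply ex_RInt_integrand_ext; [exact Hm|lra|lra]|].
    - apply (ex_RInt_continuous (V := R_CompleteNormedModule)). intros z Hz.
      assert (0 < Rmin a (1/2)) by (apply Rmin_glb_lt; lra).
      apply (ex_derive_continuous (fun x => lower_const m / x)). auto_derive. lra.
    - intros x Hx. apply integrand_ext_lower; [exact Hm|lra]. }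
  rewrite RInt_scal_inv in H0 by lra. lra.
Qed.

Lemma ex_RInt_integrand (m : nat) (alpha : R) :
  (1 <= m)%nat -> 0 < alpha < 1 -> ex_RInt (integrand m) alpha 1.
Proof.
  intros Hm Ha. apply (ex_RInt_ext (integrand_ext m)).
  - intros x Hx. rewrite Rmin_left, Rmax_right in Hx by lra.
    symmetry. apply integrand_eq_ext; [exact Hm|lra].
  - apply ex_RInt_integrand_ext; [exact Hm|lra|lra].
Qed.

Lemma u_cvg_1 (m : nat) : (1 <= m)%nat -> filterlim (u m) (at_left 1) (locally 0).
Proof.
  intros Hm. apply (filterlim_ext_loc (U m)).
  - apply (filter_imp (fun x => 0 < x < 1)); [|exact at_left_1_unit_interval].
    intros x Hx. symmetry. apply u_eq_U; assumption.
  - eapply filterlim_filter_le_1; [apply filter_le_within|].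
    replace 0 with (U m 1) by (unfold U; rewrite RInt_point; reflexivity).
    apply (ex_derive_continuous (U m)). eexists. apply is_derive_U; [exact Hm|lra].
Qed.

Lemma is_derive_u (m : nat) (a : R) :
  (1 <= m)%nat -> 0 < a < 1 -> is_derive (u m) a (- integrand_ext m a).
Proof.
  intros Hm Ha. apply (is_derive_ext_loc (U m)).
  - apply (filter_imp (fun x => u m x = U m x)); [|exact (u_locally_U m a Hm Ha)].
    intros x Hx. symmetry. exact Hx.
  - apply is_derive_U; [exact Hm|lra].
Qed.

Lemma Derive_u_cvg_1 (m : nat) : (1 <= m)%nat -> filterlim (Derive (u m)) (at_left 1) (locally 0).
Proof.
  intros Hm. apply (filterlim_ext_loc (fun x => - integrand_ext m x)).
  - apply (filter_imp (fun x => 0 < x < 1)); [|exact at_left_1_unit_interval]. intros x Hx.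
    symmetry. apply is_derive_unique, is_derive_u; assumption.
  - eapply filterlim_filter_le_1; [apply filter_le_within|].
    replace 0 with (- integrand_ext m 1) by (rewrite integrand_ext_1; ring).
    apply (continuous_opp (integrand_ext m)), integrand_ext_continuous; [exact Hm|lra].
Qed.

Lemma u_cvg_0 (m : nat) : (1 <= m)%nat -> filterlim (u m) (at_right 0) (Rbar_locally p_infty).
Proof.
  intros Hm. pose proof (lower_const_pos m Hm) as Hc.
  apply (filterlim_ge_p_infty (fun a => lower_const m * (ln (1/2) - ln a))).
  - apply (filter_imp (fun a => 0 < a < 1/2)).
    + intros a Ha. rewrite u_eq_U by (assumption || lra). apply U_lower; assumption.
    + apply (locally_interval _ 0 m_infty (1/2)); [exact I | simpl; lra |].
      intros a _ Ha Ha0. simpl in Ha. lra.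
  - apply (filterlim_comp _ _ _ ln (fun y => lower_const m * (ln (1/2) - y)) _ _ _ is_lim_ln_0).
    intros P [M HM]. exists (ln (1/2) - Rabs M / lower_const m). intros y Hy. apply HM.
    apply Rle_lt_trans with (Rabs M); [apply Rle_abs|].
    replace (Rabs M) with (lower_const m * (Rabs M / lower_const m)) by (field; lra).
    apply Rmult_lt_compat_l; lra.
Qed.

Lemma gradPhi_formula (m : nat) (x : V3) : (1 <= m)%nat ->
  gradPhi m x = vscal (2 * INR m)
    (mkV3 (c1 x * (c1 x ^ 2 + c2 x ^ 2) ^ (m - 1))
          (c2 x * (c1 x ^ 2 + c2 x ^ 2) ^ (m - 1))
          (c3 x ^ (2 * m - 1))).
Proof.
  intros Hm. unfold gradPhi, Phi, vscal. cbn [Defs.c1 Defs.c2 Defs.c3].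
  f_equal; apply is_derive_unique; auto_derive; auto.
  1, 2: replace (c1 x * (c1 x * 1) + c2 x * (c2 x * 1)) with (c1 x ^ 2 + c2 x ^ 2) by ring;
        replace (Init.Nat.pred m) with (m - 1)%nat by lia; ring.
  replace (m + (m + 0))%nat with (2 * m)%nat by lia.
  replace (Init.Nat.pred (2 * m)) with (2 * m - 1)%nat by lia.
  rewrite mult_INR. simpl. ring.
Qed.

Lemma pow_odd (x : R) (n : nat) : x ^ S (2 * n) = x * (x ^ n) ^ 2.
Proof. change (x ^ S (2 * n)) with (x * x ^ (2 * n)). rewrite Nat.mul_comm, pow_mult. reflexivity. Qed.

Lemma pow_sqr_comm (x : R) (n : nat) : (x ^ 2) ^ n = (x ^ n) ^ 2.
Proof. rewrite <- !pow_mult, Nat.mul_comm. reflexivity. Qed.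

Definition slope (x : V3) : R := (c1 x ^ 2 + c2 x ^ 2) / c3 x ^ 2.

Section PointOfNormal.

Variables (m : nat) (N : V3).
Hypotheses (Hm : (1 <= m)%nat) (HN : 0 < c3 N).

Lemma gradPhi_parallel_components (x : V3) (mu : R) : gradPhi m x = vscal mu N ->
  2 * INR m * (c1 x * (c1 x ^ 2 + c2 x ^ 2) ^ (m - 1)) = mu * c1 N /\
  2 * INR m * (c2 x * (c1 x ^ 2 + c2 x ^ 2) ^ (m - 1)) = mu * c2 N /\
  2 * INR m * c3 x ^ (2 * m - 1) = mu * c3 N.
Proof.
  intros HG. rewrite gradPhi_formula in HG by exact Hm. unfold vscal in HG.
  injection HG as E1 E2 E3. auto.
Qed.

Lemma height_pos_of_normal (x : V3) (mu : R) : 0 < mu -> gradPhi m x = vscal mu N -> 0 < c3 x.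
Proof.
  intros Hmu HG. destruct (gradPhi_parallel_components x mu HG) as (_ & _ & E3).
  assert (HM : 0 < INR m) by (apply lt_0_INR; lia).
  destruct m as [|n]; [lia|]. replace (2 * S n - 1)%nat with (S (2 * n)) in E3 by lia.
  rewrite pow_odd in E3.
  destruct (Rle_or_lt (c3 x) 0) as [Hle|Hlt]; [exfalso|exact Hlt].
  assert (0 <= (c3 x ^ n) ^ 2) by apply pow2_ge_0.
  assert (c3 x * (c3 x ^ n) ^ 2 <= 0) by nra.
  assert (0 < mu * c3 N) by nra. nra.
Qed.

Lemma slope_of_normal (x : V3) (mu : R) : 0 < mu -> gradPhi m x = vscal mu N ->
  slope x ^ (2 * m - 1) * c3 N ^ 2 = c1 N ^ 2 + c2 N ^ 2.
Proof.
  intros Hmu HG. pose proof (height_pos_of_normal x mu Hmu HG) as Ha.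
  destruct (gradPhi_parallel_components x mu HG) as (E1 & E2 & E3).
  assert (HM : 0 < INR m) by (apply lt_0_INR; lia).
  destruct m as [|n]; [lia|]. replace (S n - 1)%nat with n in E1, E2 by lia.
  replace (2 * S n - 1)%nat with (S (2 * n)) in * by lia.
  set (q := c1 x ^ 2 + c2 x ^ 2) in *. set (k := S (2 * n)) in *.
  assert (Sq : q ^ k = ((mu * c1 N) ^ 2 + (mu * c2 N) ^ 2) / (2 * INR (S n)) ^ 2).
  { rewrite <- E1, <- E2. unfold k. rewrite pow_odd. unfold q. field. lra. }
  assert (Sa : (c3 x ^ 2) ^ k = (mu * c3 N) ^ 2 / (2 * INR (S n)) ^ 2).
  { rewrite <- E3, pow_sqr_comm. field. lra. }
  unfold slope. fold q. unfold Rdiv. rewrite Rpow_mult_distr, pow_inv, Sq, Sa.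
  field. split; lra.
Qed.

Lemma sphere_slope (x : V3) : Phi m x = 1 -> c3 x <> 0 ->
  (c3 x ^ 2) ^ m * (slope x ^ m + 1) = 1.
Proof.
  intros HP Ha. unfold Phi in HP. rewrite pow_mult in HP.
  rewrite <- HP at 2. unfold slope, Rdiv. rewrite Rpow_mult_distr, pow_inv.
  field. apply pow_nonzero, pow_nonzero. exact Ha.
Qed.

Theorem point_of_normal_unique (x y : V3) (mu nu : R) : 0 < mu -> 0 < nu ->
  Phi m x = 1 -> Phi m y = 1 ->
  gradPhi m x = vscal mu N -> gradPhi m y = vscal nu N ->
  0 < c1 y ^ 2 + c2 y ^ 2 -> x = y.
Proof.
  intros Hmu Hnu HPx HPy HGx HGy Hqy.
  pose proof (height_pos_of_normal x mu Hmu HGx) as Hx3.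
  pose proof (height_pos_of_normal y nu Hnu HGy) as Hy3.
  assert (Hslope : forall z, 0 < c3 z -> 0 <= slope z).
  { intros z Hz. unfold slope. apply Rmult_le_pos; [nra | left; apply Rinv_0_lt_compat; nra]. }
  assert (Es : slope x = slope y).
  { apply (pow_inj_l _ _ (2 * m - 1)); [lia | apply Hslope; exact Hx3 | apply Hslope; exact Hy3 |].
    apply Rmult_eq_reg_r with (c3 N ^ 2); [|apply pow_nonzero; lra].
    rewrite (slope_of_normal x mu), (slope_of_normal y nu); auto. }
  assert (Ez : c3 x = c3 y).
  { pose proof (sphere_slope x HPx ltac:(lra)) as Sx. pose proof (sphere_slope y HPy ltac:(lra)) as Sy.
    pose proof (pow_le (slope y) m (Hslope y Hy3)).
    apply (pow_inj_l _ _ 2); [lia|lra|lra|].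
    apply (pow_inj_l _ _ m); [lia|nra|nra|].
    apply Rmult_eq_reg_r with (slope y ^ m + 1); [|lra].
    rewrite Es in Sx. lra. }
  assert (Eq : c1 x ^ 2 + c2 x ^ 2 = c1 y ^ 2 + c2 y ^ 2).
  { transitivity (slope x * c3 x ^ 2); [unfold slope; field; lra|].
    rewrite Es, Ez. unfold slope. field. lra. }
  destruct (gradPhi_parallel_components x mu HGx) as (Ex1 & Ex2 & Ex3).
  destruct (gradPhi_parallel_components y nu HGy) as (Ey1 & Ey2 & Ey3).
  assert (HM : 0 < INR m) by (apply lt_0_INR; lia).
  assert (Emu : mu = nu) by (apply Rmult_eq_reg_r with (c3 N); [rewrite <- Ex3, <- Ey3, Ez|]; lra).
  subst nu. rewrite Eq in Ex1, Ex2.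
  assert (Hqn : 0 < (c1 y ^ 2 + c2 y ^ 2) ^ (m - 1)) by (apply pow_lt; exact Hqy).
  assert (E1 : c1 x = c1 y) by (apply Rmult_eq_reg_r with (2 * INR m * (c1 y ^ 2 + c2 y ^ 2) ^ (m - 1)); nra).
  assert (E2 : c2 x = c2 y) by (apply Rmult_eq_reg_r with (2 * INR m * (c1 y ^ 2 + c2 y ^ 2) ^ (m - 1)); nra).
  destruct x, y. cbn in *. subst. reflexivity.
Qed.

End PointOfNormal.

Definition has_vderive (g : R -> V3) (x : R) (w : V3) : Prop :=
  is_derive (fun t => c1 (g t)) x (c1 w) /\
  is_derive (fun t => c2 (g t)) x (c2 w) /\
  is_derive (fun t => c3 (g t)) x (c3 w).

Lemma has_vderive_ext_loc (g h : R -> V3) (x : R) (w : V3) :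
  locally x (fun t => h t = g t) -> has_vderive h x w -> has_vderive g x w.
Proof.
  intros Hloc (D1 & D2 & D3).
  assert (Hc : forall c : V3 -> R, locally x (fun t => c (h t) = c (g t))).
  { intros c. apply (filter_imp (fun t => h t = g t)); [|exact Hloc]. intros t Ht. rewrite Ht. reflexivity. }
  split; [|split]; eapply is_derive_ext_loc; [apply (Hc Defs.c1)| exact D1 | apply (Hc Defs.c2) | exact D2 | apply (Hc Defs.c3) | exact D3].
Qed.

Lemma d_s_of_has_vderive (F : R -> R -> V3) (s v : R) (w : V3) :
  has_vderive (fun t => F t v) s w -> d_s F s v = w.
Proof.
  intros (D1 & D2 & D3). destruct w. unfold d_s.
  f_equal; apply is_derive_unique; assumption.
Qed.

Lemma d_v_of_has_vderive (F : R -> R -> V3) (s v : R) (w : V3) :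
  has_vderive (fun t => F s t) v w -> d_v F s v = w.
Proof.
  intros (D1 & D2 & D3). destruct w. unfold d_v.
  f_equal; apply is_derive_unique; assumption.
Qed.

Lemma partials_exist_of_has_vderive (F : R -> R -> V3) (s v : R) (ws wv : V3) :
  has_vderive (fun t => F t v) s ws -> has_vderive (fun t => F s t) v wv -> partials_exist F s v.
Proof.
  intros (D1 & D2 & D3) (D4 & D5 & D6).
  repeat split; eexists; eassumption.
Qed.

Lemma minkK_eq_diagonal (F eta : R -> R -> V3) (s v a d : R) :
  d_s eta s v = vscal a (d_s F s v) -> d_v eta s v = vscal d (d_v F s v) ->
  minkK_eq F eta s v (a * d).
Proof.
  intros Es Ev. exists a, 0, 0, d. rewrite Es, Ev.
  unfold vadd, vscal. cbn [Defs.c1 Defs.c2 Defs.c3].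
  split; [|split]; [f_equal; ring | f_equal; ring | ring].
Qed.

Lemma cos_sin_sq (v : R) : cos v ^ 2 + sin v ^ 2 = 1.
Proof. pose proof (sin2_cos2 v) as E. unfold Rsqr in E. simpl. lra. Qed.

Definition surf_tangent_s (m : nat) (eps s v : R) : V3 :=
  mkV3 (cos v) (sin v) (- eps * integrand_ext m s).
Definition surf_tangent_v (s v : R) : V3 := mkV3 (- (s * sin v)) (s * cos v) 0.
Definition surf_normal (m : nat) (eps s v : R) : V3 :=
  mkV3 (eps * integrand_ext m s * s * cos v) (eps * integrand_ext m s * s * sin v) s.

Lemma has_vderive_rot_surf_s (m : nat) (eps s v : R) : (1 <= m)%nat -> 0 < s < 1 ->
  has_vderive (fun t => rot_surf m eps t v) s (surf_tangent_s m eps s v).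
Proof.
  intros Hm Hs. unfold has_vderive, rot_surf, surf_tangent_s. cbn [Defs.c1 Defs.c2 Defs.c3].
  split; [|split].
  - auto_derive; auto; ring.
  - auto_derive; auto; ring.
  - replace (- eps * integrand_ext m s) with (eps * - integrand_ext m s) by ring.
    apply (is_derive_scal (u m)), is_derive_u; assumption.
Qed.

Lemma has_vderive_rot_surf_v (m : nat) (eps s v : R) :
  has_vderive (fun t => rot_surf m eps s t) v (surf_tangent_v s v).
Proof.
  unfold has_vderive, rot_surf, surf_tangent_v. cbn [Defs.c1 Defs.c2 Defs.c3].
  split; [|split]; auto_derive; auto; ring.
Qed.

Lemma cross_surf_tangents (m : nat) (eps s v : R) :
  cross (surf_tangent_s m eps s v) (surf_tangent_v s v) = surf_normal m eps s v.
Proof.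
  unfold cross, surf_tangent_s, surf_tangent_v, surf_normal. cbn [Defs.c1 Defs.c2 Defs.c3].
  f_equal; try ring.
  rewrite <- (Rmult_1_r s) at 3. rewrite <- (cos_sin_sq v). ring.
Qed.

Definition gauss_radius (s : R) : R := sqrt (1 - s ^ 2).
Definition gauss_height (m : nat) (s : R) : R := Rpower (den m s) (/ (2 * INR m)).
Definition gauss_map (m : nat) (eps s v : R) : V3 :=
  mkV3 (eps * gauss_radius s * cos v) (eps * gauss_radius s * sin v) (gauss_height m s).
Definition gauss_scale (m : nat) (s : R) : R := 2 * INR m * gauss_height m s ^ (2 * m - 1) / s.

Lemma gauss_radius_pos (s : R) : 0 < s < 1 -> 0 < gauss_radius s.
Proof. intros Hs. apply sqrt_lt_R0. nra. Qed.

Lemma gauss_height_pow (m : nat) (s : R) : (1 <= m)%nat -> 0 < s < 1 ->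
  gauss_height m s ^ (2 * m) = den m s.
Proof.
  intros Hm Hs. assert (0 < INR m) by (apply lt_0_INR; lia).
  unfold gauss_height. rewrite Rpower_pow_mult, mult_INR.
  replace (/ (2 * INR m) * (INR 2 * INR m)) with 1 by (simpl; field; lra).
  apply Rpower_1, den_pos; [exact Hm | nra].
Qed.

Lemma gauss_height_pow_pred (m : nat) (s : R) : (1 <= m)%nat ->
  gauss_height m s ^ (2 * m - 1) = Rpower (den m s) (expo m).
Proof.
  intros Hm. assert (0 < INR m) by (apply lt_0_INR; lia).
  unfold gauss_height. rewrite Rpower_pow_mult, minus_INR, mult_INR by lia.
  f_equal. unfold expo. simpl. field. lra.
Qed.

Lemma gauss_map_horizontal (m : nat) (eps s v : R) : eps ^ 2 = 1 -> 0 < s < 1 ->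
  c1 (gauss_map m eps s v) ^ 2 + c2 (gauss_map m eps s v) ^ 2 = 1 - s ^ 2.
Proof.
  intros He Hs. unfold gauss_map, gauss_radius. cbn [Defs.c1 Defs.c2].
  transitivity (eps ^ 2 * sqrt (1 - s ^ 2) ^ 2 * (cos v ^ 2 + sin v ^ 2)); [ring|].
  rewrite He, cos_sin_sq, pow2_sqrt by nra. ring.
Qed.

Lemma Phi_gauss_map (m : nat) (eps s v : R) : (1 <= m)%nat -> eps ^ 2 = 1 -> 0 < s < 1 ->
  Phi m (gauss_map m eps s v) = 1.
Proof.
  intros Hm He Hs. unfold Phi. rewrite gauss_map_horizontal by assumption.
  cbn [Defs.c3 gauss_map]. rewrite gauss_height_pow by assumption. unfold den. ring.
Qed.

Lemma gradPhi_gauss_map (m : nat) (eps s v : R) : (1 <= m)%nat -> eps ^ 2 = 1 -> 0 < s < 1 ->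
  gradPhi m (gauss_map m eps s v) = vscal (gauss_scale m s) (surf_normal m eps s v).
Proof.
  intros Hm He Hs. rewrite gradPhi_formula, gauss_map_horizontal by assumption.
  assert (HP : Rpower (den m s) (expo m) <> 0) by apply Rgt_not_eq, exp_pos.
  unfold vscal, gauss_map, gauss_scale, surf_normal, integrand_ext.
  cbn [Defs.c1 Defs.c2 Defs.c3]. rewrite gauss_height_pow_pred, Rpower_Ropp by assumption.
  fold (gauss_radius s). f_equal; field; lra.
Qed.

Lemma gauss_scale_pos (m : nat) (s : R) : (1 <= m)%nat -> 0 < s -> 0 < gauss_scale m s.
Proof.
  intros Hm Hs. assert (0 < INR m) by (apply lt_0_INR; lia).
  assert (0 < gauss_height m s ^ (2 * m - 1)) by (apply pow_lt, exp_pos).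
  unfold gauss_scale. apply Rdiv_lt_0_compat; nra.
Qed.

Lemma is_BG_map_gauss_map (m : nat) (eps : R) : (1 <= m)%nat -> eps ^ 2 = 1 ->
  is_BG_map m param_dom (rot_surf m eps) (gauss_map m eps).
Proof.
  intros Hm He s v Hs. unfold param_dom in Hs. split; [apply Phi_gauss_map; assumption|].
  exists (gauss_scale m s). split; [apply gauss_scale_pos; [exact Hm | lra]|].
  rewrite (d_s_of_has_vderive _ _ _ _ (has_vderive_rot_surf_s m eps s v Hm Hs)),
          (d_v_of_has_vderive _ _ _ _ (has_vderive_rot_surf_v m eps s v)), cross_surf_tangents.
  apply gradPhi_gauss_map; assumption.
Qed.

Lemma BG_map_eq_gauss_map (m : nat) (eps : R) (eta : R -> R -> V3) (s v : R) :
  (1 <= m)%nat -> eps ^ 2 = 1 -> is_BG_map m param_dom (rot_surf m eps) eta -> 0 < s < 1 ->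
  eta s v = gauss_map m eps s v.
Proof.
  intros Hm He Hbg Hs.
  destruct (Hbg s v Hs) as [HP [mu [Hmu HG]]].
  rewrite (d_s_of_has_vderive _ _ _ _ (has_vderive_rot_surf_s m eps s v Hm Hs)),
          (d_v_of_has_vderive _ _ _ _ (has_vderive_rot_surf_v m eps s v)), cross_surf_tangents in HG.
  apply (point_of_normal_unique m (surf_normal m eps s v) Hm ltac:(simpl; lra) _ _ mu (gauss_scale m s));
    try assumption.
  - apply gauss_scale_pos; [exact Hm | lra].
  - apply Phi_gauss_map; assumption.
  - apply gradPhi_gauss_map; assumption.
  - rewrite gauss_map_horizontal by assumption. nra.
Qed.

(* [Rpower den (- expo m) = gauss_height / den] since [- expo m = 1/(2m) - 1]. *)
Lemma is_derive_gauss_height (m : nat) (s : R) : (1 <= m)%nat -> 0 < s < 1 ->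
  is_derive (gauss_height m) s (s * integrand_ext m s / gauss_radius s).
Proof.
  intros Hm Hs. assert (0 < INR m) by (apply lt_0_INR; lia).
  pose proof (den_pos m s Hm ltac:(nra)) as Hd. pose proof (gauss_radius_pos s Hs) as Ht.
  replace (s * integrand_ext m s / gauss_radius s)
    with (s * (1 - s ^ 2) ^ (m - 1) * (gauss_height m s / den m s)).
  2:{ unfold integrand_ext, gauss_height. fold (gauss_radius s).
      replace (- expo m) with (/ (2 * INR m) - 1) by (unfold expo; field; lra).
      rewrite Rpower_minus_1 by exact Hd. field. split; lra. }
  unfold gauss_height, Rpower, den in *. auto_derive.
  - replace (1 + - (s * (s * 1))) with (1 - s ^ 2) by ring. lra.
  - replace (1 + - (s * (s * 1))) with (1 - s ^ 2) by ring.
    replace (1 + - (1 - s ^ 2) ^ m) with (1 - (1 - s ^ 2) ^ m) by ring.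
    replace (Init.Nat.pred m) with (m - 1)%nat by lia.
    field. lra.
Qed.

Lemma has_vderive_gauss_map_s (m : nat) (eps s v : R) : (1 <= m)%nat -> eps ^ 2 = 1 -> 0 < s < 1 ->
  has_vderive (fun t => gauss_map m eps t v) s
    (vscal (- eps * s / gauss_radius s) (surf_tangent_s m eps s v)).
Proof.
  intros Hm He Hs. pose proof (gauss_radius_pos s Hs) as Ht.
  unfold has_vderive, gauss_map, vscal, surf_tangent_s. cbn [Defs.c1 Defs.c2 Defs.c3].
  split; [|split].
  1, 2: unfold gauss_radius in *; auto_derive; replace (1 + - (s * (s * 1))) with (1 - s ^ 2) by ring;
        [nra | field; lra].
  replace (- eps * s / gauss_radius s * (- eps * integrand_ext m s))
    with (eps ^ 2 * (s * integrand_ext m s / gauss_radius s)) by (field; lra).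
  rewrite He, Rmult_1_l.
  apply is_derive_gauss_height; assumption.
Qed.

Lemma has_vderive_gauss_map_v (m : nat) (eps s v : R) : 0 < s ->
  has_vderive (fun t => gauss_map m eps s t) v (vscal (eps * gauss_radius s / s) (surf_tangent_v s v)).
Proof.
  intros Hs. unfold has_vderive, gauss_map, vscal, surf_tangent_v. cbn [Defs.c1 Defs.c2 Defs.c3].
  split; [|split]; auto_derive; auto; field; lra.
Qed.

Lemma BG_map_partials_curvature (m : nat) (eps : R) (eta : R -> R -> V3) (s v : R) :
  (1 <= m)%nat -> eps ^ 2 = 1 -> is_BG_map m param_dom (rot_surf m eps) eta -> 0 < s < 1 ->
  partials_exist eta s v /\ minkK_eq (rot_surf m eps) eta s v (-1).
Proof.
  intros Hm He Hbg Hs. pose proof (gauss_radius_pos s Hs) as Ht.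
  assert (Ds : has_vderive (fun t => eta t v) s
                 (vscal (- eps * s / gauss_radius s) (surf_tangent_s m eps s v))).
  { apply (has_vderive_ext_loc _ (fun t => gauss_map m eps t v)).
    - apply (locally_interval _ s 0 1); try (simpl; lra).
      intros t Ht0 Ht1. symmetry. apply BG_map_eq_gauss_map; simpl in *; auto; lra.
    - apply has_vderive_gauss_map_s; assumption. }
  assert (Dv : has_vderive (fun t => eta s t) v
                 (vscal (eps * gauss_radius s / s) (surf_tangent_v s v))).
  { apply (has_vderive_ext_loc _ (fun t => gauss_map m eps s t)).
    - apply filter_forall. intros t. symmetry. apply BG_map_eq_gauss_map; assumption.
    - apply has_vderive_gauss_map_v. lra. }
  split; [exact (partials_exist_of_has_vderive _ _ _ _ _ Ds Dv)|].
  replace (-1) with ((- eps * s / gauss_radius s) * (eps * gauss_radius s / s))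
    by (replace (-1) with (- eps ^ 2) by lra; field; lra).
  apply minkK_eq_diagonal.
  - rewrite (d_s_of_has_vderive _ _ _ _ Ds).
    rewrite (d_s_of_has_vderive _ _ _ _ (has_vderive_rot_surf_s m eps s v Hm Hs)). reflexivity.
  - rewrite (d_v_of_has_vderive _ _ _ _ Dv).
    rewrite (d_v_of_has_vderive _ _ _ _ (has_vderive_rot_surf_v m eps s v)). reflexivity.
Qed.

Theorem mainTheorem6 (m : nat) (hm : (2 <= m)%nat) :
  (forall alpha, 0 < alpha < 1 -> ex_RInt (integrand m) alpha 1) /\
  filterlim (u m) (at_left 1) (locally 0) /\
  (forall alpha, 0 < alpha < 1 -> ex_derive (u m) alpha) /\
  filterlim (Derive (u m)) (at_left 1) (locally 0) /\
  filterlim (u m) (at_right 0) (Rbar_locally p_infty) /\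
  (forall eps, (eps = 1 \/ eps = -1) ->
     (exists eta, is_BG_map m param_dom (rot_surf m eps) eta) /\
     (forall eta, is_BG_map m param_dom (rot_surf m eps) eta ->
        forall s v, param_dom s v ->
          partials_exist eta s v /\ minkK_eq (rot_surf m eps) eta s v (-1))).
Proof.
  assert (Hm : (1 <= m)%nat) by lia.
  split; [intros; apply ex_RInt_integrand; assumption|].
  split; [apply u_cvg_1; exact Hm|].
  split; [intros alpha Ha; eexists; apply is_derive_u; assumption|].
  split; [apply Derive_u_cvg_1; exact Hm|].
  split; [apply u_cvg_0; exact Hm|].
  intros eps Heps. assert (He : eps ^ 2 = 1) by (destruct Heps; subst; ring).
  split.
  - exists (gauss_map m eps). apply is_BG_map_gauss_map; assumption.
  - intros eta Hbg s v Hs. apply BG_map_partials_curvature; assumption.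
Qed.
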